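(* Let $n\ge1$, $1\le i\le n$, and let $\mathfrak{g}$ be of type $B_n$. Then \[ \widetilde{\operatorname{ps}}(\widetilde\omega_i)=\begin{bmatrix}2n+1\\ i\end{bmatrix}_q. \]
   Context: For type $B_n$: $\widetilde\omega_i=\omega_i=\epsilon_1+\cdots+\epsilon_i$ for $1\le i<n$ and $\widetilde\omega_n=2\omega_n=\epsilon_1+\cdots+\epsilon_n$. The principal specialization $\operatorname{ps}(\lambda)$ is $\operatorname{ch}V(\lambda)$ with $x_j=q^j$ substituted, and $\widetilde{\operatorname{ps}}(\lambda)=q^{-\eta}\operatorname{ps}(\lambda)$ with $\eta$ the lowest exponent of $q$ in $\operatorname{ps}(\lambda)$. $\begin{bmatrix}a\\ b\end{bmatrix}_q$ is the Gaussian binomial coefficient. *)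

From HB Require Import structures.
From mathcomp Require Import all_boot all_order all_fingroup all_algebra.
Unset Strict Implicit.
Unset Printing Implicit Defensive.
Import GRing.Theory Num.Theory.
Local Open Scope ring_scope.

(* The field of rational functions Q(t), where t plays the role of q^(1/2). *)
Definition F : fieldType := {fraction {poly rat}}.
Definition tq : F := tofrac ('X : {poly rat}).
Definition qq : F := tq ^+ 2.

Definition evq (p : {poly rat}) : F := (map_poly (fun c : rat => tofrac (c%:P)) p).[qq].

(* Type B_n weights are written in the epsilon basis, with DOUBLED coordinates
   (so that half-integral weights such as rho are integral):
   m : 'I_n -> int represents mu = sum_k (m k / 2) eps_(k+1).
   Under the principal specialization x_j = q^j, the monomial x^mu becomes
   q^(sum_j j mu_j) = t^(sum_k (k+1) * m k). *)

(* Specialized Weyl alternant  A_mu(x_j = q^j) = sum_{w in W(B_n)} sgn(w) x^(w mu),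
   W(B_n) = signed permutations (s, e): (w mu)_{s k} = (-1)^(e k) mu_k,
   sgn(w) = sgn(s) * (-1)^#{k | e k}. *)
Definition altB (n : nat) (m : 'I_n -> int) : F :=
  \sum_(s : 'S_n) \sum_(e : {ffun 'I_n -> bool})
    (-1) ^+ (odd_perm s + #|[set k | e k]|)%N *
    tq ^ (\sum_(k < n) (((s k : nat).+1)%:Z * (-1) ^+ (e k : nat) * m k)).

Definition rho2 (n : nat) : 'I_n -> int := fun k => (2 * (n - k) - 1)%N%:Z.

Definition omega_tilde2 (n i : nat) : 'I_n -> int :=
  fun k => if (k < i)%N then 2%:Z else 0%:Z.

(* Principal specialization of ch V(lambda) (Weyl character formula):
   ps(lambda) = A_(lambda+rho) / A_rho  evaluated at x_j = q^j. *)
Definition psB (n : nat) (lam2 : 'I_n -> int) : F :=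
  altB n (fun k => lam2 k + rho2 n k) / altB n (rho2 n).

Definition lowest_q_exponent (f : F) (e : int) : Prop :=
  exists p : {poly rat}, p`_0 != 0 /\ f = qq ^ e * evq p.

Definition ps_tilde (f : F) (eta : int) : F := qq ^ (- eta) * f.

Definition gauss_binom (a b : nat) : F :=
  \prod_(k < b) ((1 - qq ^+ (a - k)) / (1 - qq ^+ k.+1)).

(* By the Weyl character formula, ps(λ) = A_(λ+ρ) / A_ρ, where A_μ is the B_n
   alternant specialised at x_j = t^(2j) (q = t^2). If 2(λ+ρ) has coordinates
   m_k = 2 a_k + 1, then A = det (y_k^j - y_k^-j) with y_k = t^(m_k); row reduction by
   Chebyshev polynomials of the second kind turns this into prod_k (y_k - y_k^-1) times a
   Vandermonde determinant in y_k + y_k^-1, i.e. a Weyl-denominator product over the set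
   {a_k} with factors [2a+1] and [a-b][a+b+1], where [r] = t^r - t^-r.
   For ρ and for ω̃_i + ρ this set is {0..n} minus n, resp. minus n - i, and
   removing c from {0..n} divides the product by +-[n-c]! [n+c+1]!. Hence
   ps(ω̃_i) = [2n+1]! / ([i]! [2n+1-i]!), which is t^(-i(2n+1-i)) times the Gaussian
   binomial; the latter is a polynomial in q with constant term 1 by the q-Pascal rule. *)

From mathcomp Require Import all_boot all_order all_fingroup all_algebra.
From mathcomp Require Import zify ring.
Import GRing.Theory.
Local Open Scope ring_scope.

Lemma prodr_exprz (R : fieldType) (x : R) (I : Type) (r : seq I) (P : pred I)
    (G : I -> int) : x != 0 ->
  \prod_(i <- r | P i) x ^ G i = x ^ (\sum_(i <- r | P i) G i).
Proof.
move=> x_neq0; elim/big_rec2: _ => [|i a b _ ->]; first by rewrite expr0z.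
by rewrite expfzDr.
Qed.

Lemma perm_map_rem_iota (f : nat -> nat) n c : (c <= n)%N ->
    (forall k l, (k < l < n)%N -> (f l < f k)%N) ->
    (forall k, (k < n)%N -> (f k <= n)%N && (f k != c)) ->
  perm_eq [seq f k | k <- iota 0 n] (rem c (iota 0 n.+1)).
Proof.
move=> le_cn f_decr f_range.
have f_inj : {in iota 0 n &, injective f}.
  move=> k l; rewrite !mem_iota /= => lt_kn lt_ln fkl.
  case: (ltngtP k l) => // [lt_kl | lt_lk].
  - by have := f_decr k l; rewrite lt_kl lt_ln fkl ltnn => /(_ isT).
  - by have := f_decr l k; rewrite lt_lk lt_kn fkl ltnn => /(_ isT).
have f_uniq : uniq [seq f k | k <- iota 0 n] by rewrite map_inj_in_uniq ?iota_uniq.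
apply: uniq_perm; rewrite ?rem_uniq ?iota_uniq //.
apply: (uniq_min_size f_uniq _ _).2 => [a /mapP[k] | ].
- rewrite mem_iota (mem_rem_uniq _ (iota_uniq _ _)) => /andP[_ lt_kn] ->.
  by rewrite inE mem_iota; have := f_range k lt_kn; lia.
- by rewrite size_map size_rem ?mem_iota ?size_iota //=; lia.
Qed.

Lemma sum_sub_ord a i : (i <= a)%N ->
  (\sum_(k < i) (a - k) = \sum_(k < i) k.+1 + i * (a - i))%N.
Proof.
elim: i => [|i IH] lt_ia; first by rewrite !big_ord0.
rewrite !big_ord_recr /= (IH (ltnW lt_ia)) -(subnSK lt_ia).
by move: (a - i.+1)%N => d; ring.
Qed.

Lemma prod_nat_opp (R : comPzRingType) (F : nat -> R) m n :
  \prod_(m <= k < n) - F k = (-1) ^+ (n - m) * \prod_(m <= k < n) F k.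
Proof.
rewrite (eq_bigr (fun k => -1 * F k)) => [|k _]; last by rewrite mulN1r.
by rewrite big_split prodr_const_nat.
Qed.

Lemma rem_iota N c : (c <= N)%N ->
  rem c (iota 0 N.+1) = index_iota 0 c ++ index_iota c.+1 N.+1.
Proof.
move=> le_cN; rewrite rem_filter ?iota_uniq // /index_iota !subn0 subSS.
have -> : iota 0 N.+1 = iota 0 c ++ c :: iota c.+1 (N - c).
  by rewrite -[N.+1](subnKC (leqW le_cN)) iotaD add0n subSn.
rewrite filter_cat /= eqxx /=; congr (_ ++ _); apply/all_filterP/allP => b;
  by rewrite mem_iota /=; lia.
Qed.

Lemma bin2_double i : ('C(i, 2) * 2 = i * i.-1)%N.
Proof.
elim: i => // i IH; rewrite binS bin1 mulnDl IH.
by case: i {IH} => //= i; ring.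
Qed.

Section ChebyshevDeterminant.

Context {R : fieldType}.

Fixpoint chebU (j : nat) : {poly R} :=
  match j with
  | 0 => 1
  | 1 => 'X
  | (S ((S j') as j1)) => 'X * chebU j1 - chebU j'
  end.

Lemma chebUSS j : chebU j.+2 = 'X * chebU j.+1 - chebU j.
Proof. by []. Qed.

Lemma chebU_coef j : (chebU j)`_j = 1 /\ forall r, (j < r)%N -> (chebU j)`_r = 0.
Proof.
pose P j := (chebU j)`_j = 1 /\ forall r, (j < r)%N -> (chebU j)`_r = 0.
suff PS : forall j, P j /\ P j.+1 by case: (PS j).
elim=> [|m [[_ high0] [lead1 high1]]].
  split; split=> [|r]; rewrite ?coefC ?coefX //; first by case: r.
  by case: r => [|[]].
split=> //; split=> [|[|r] ltmr]; rewrite chebUSS coefB coefXM //=.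
  by rewrite lead1 high0 ?subr0.
by rewrite high1 ?high0 ?subr0 //; lia.
Qed.

Lemma size_chebU j : (size (chebU j) <= j.+1)%N.
Proof. by apply/leq_sizeP => r ltjr; case: (chebU_coef j) => _ ->. Qed.

Lemma chebU_horner (y : R) j : y != 0 ->
  (y - y^-1) * (chebU j).[y + y^-1] = y ^+ j.+1 - (y ^+ j.+1)^-1.
Proof.
move=> y_neq0.
pose P j := (y - y^-1) * (chebU j).[y + y^-1] = y ^+ j.+1 - (y ^+ j.+1)^-1.
suff PS : forall j, P j /\ P j.+1 by case: (PS j).
elim=> [|m [IH1 IH2]].
  by rewrite /P /= !hornerE expr1 expr2; split=> //; field.
split=> //; rewrite /P (chebUSS m) hornerD hornerN hornerM hornerX mulrBr mulrCA IH2 IH1.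
by rewrite !exprS; field; rewrite expf_neq0.
Qed.

Lemma det_chebU n (X : 'I_n -> R) : (forall k, X k != 0) ->
  \det (\matrix_(k, j) (X k ^+ (j : nat).+1 - (X k ^+ (j : nat).+1)^-1)) =
  \prod_k (X k - (X k)^-1) *
  \prod_(k < n) \prod_(l < n | (k < l)%N) ((X l + (X l)^-1) - (X k + (X k)^-1)).
Proof.
move=> X_neq0.
pose L : 'M[R]_n := \matrix_(j, r) (chebU j)`_r.
have -> : \matrix_(k, j) (X k ^+ (j : nat).+1 - (X k ^+ (j : nat).+1)^-1) =
    diag_mx (\row_k (X k - (X k)^-1)) *m
    (L *m Vandermonde n (\row_k (X k + (X k)^-1)))^T.
  apply/matrixP => k j; rewrite mul_diag_mx !mxE -chebU_horner //; congr (_ * _).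
  rewrite (horner_coef_wide _ (leq_trans (size_chebU j) (ltn_ord j))).
  by apply: eq_bigr => r _; rewrite !mxE.
have L_trig : is_trig_mx L.
  by apply/is_trig_mxP => j r ltjr; rewrite mxE; case: (chebU_coef j) => _ ->.
have L_diag : \prod_(j < n) L j j = 1.
  by apply: big1 => j _; rewrite mxE; case: (chebU_coef j).
rewrite det_mulmx det_diag det_tr det_mulmx det_Vandermonde det_trig // L_diag mul1r.
by congr (_ * _); apply: eq_bigr => k _; rewrite ?mxE //; apply: eq_bigr => l _; rewrite !mxE.
Qed.

End ChebyshevDeterminant.

Section QBinomial.

Context {R : fieldType} (q : R).
Hypothesis q_not_unity_root : forall r, (0 < r)%N -> q ^+ r != 1.

Definition qbinom (a b : nat) : R := \prod_(k < b) ((1 - q ^+ (a - k)) / (1 - q ^+ k.+1)).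

Lemma qbinom_eq0 a b : (a < b)%N -> qbinom a b = 0.
Proof.
move=> lt_ab; apply/eqP/prodf_eq0; exists (Ordinal lt_ab) => //=.
by rewrite subnn expr0 subrr mul0r.
Qed.

Lemma qbinomS a b : qbinom a.+1 b.+1 = qbinom a b + q ^+ b.+1 * qbinom a b.+1.
Proof.
case: (ltnP a b) => [lt_ab | le_ba].
  by rewrite !qbinom_eq0 ?mulr0 ?addr0 // ltnS ltnW.
have qpoch_neq0 k : 1 - q ^+ k.+1 != 0 by rewrite subr_eq0 eq_sym q_not_unity_root.
pose N a b := \prod_(k < b) (1 - q ^+ (a - k)).
pose D b := \prod_(k < b) (1 - q ^+ k.+1).
have ND a' b' : qbinom a' b' = N a' b' / D b' by rewrite /qbinom prodf_div.
have NSS : N a.+1 b.+1 = (1 - q ^+ a.+1) * N a b by rewrite /N big_ord_recl.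
have NS : N a b.+1 = N a b * (1 - q ^+ (a - b)) by rewrite /N big_ord_recr.
have DS : D b.+1 = D b * (1 - q ^+ b.+1) by rewrite /D big_ord_recr.
have D_neq0 : D b != 0 by apply/prodf_neq0 => k _.
rewrite !ND NSS NS DS.
have -> : q ^+ a.+1 = q ^+ b.+1 * q ^+ (a - b) by rewrite -exprD; congr (_ ^+ _); lia.
by field; rewrite D_neq0 qpoch_neq0.
Qed.

End QBinomial.

Section WeylProduct.

Context {R : fieldType} (x : R).
Hypothesis x_neq0 : x != 0.
Hypothesis x_not_unity_root : forall r, (0 < r)%N -> x ^+ r != 1.

Definition qdiff (r : nat) : R := x ^+ r - x ^- r.
Definition qsum (r : nat) : R := x ^+ r + x ^- r.
Definition qfact (r : nat) : R := \prod_(0 <= k < r) qdiff k.+1.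

Lemma qdiff_neq0 r : (0 < r)%N -> qdiff r != 0.
Proof.
move=> r_gt0; have xr_neq0 : x ^+ r != 0 by rewrite expf_neq0.
have -> : qdiff r = (x ^+ (r + r) - 1) / x ^+ r.
  by rewrite /qdiff exprD; field.
by rewrite mulf_neq0 ?invr_eq0 // subr_eq0 x_not_unity_root ?addn_gt0 ?r_gt0.
Qed.

Lemma qfact0 : qfact 0 = 1.
Proof. by rewrite /qfact big_geq. Qed.

Lemma qfact_neq0 r : qfact r != 0.
Proof. by rewrite prodf_seq_neq0; apply/allP => k _; apply: qdiff_neq0. Qed.

Lemma qfactD m r : qfact (m + r) = qfact m * \prod_(0 <= k < r) qdiff (m + k).+1.
Proof.
rewrite /qfact (big_cat_nat (leq0n m) (leq_addr r m)) /=.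
rewrite -{2}[m]add0n big_addn addKn; congr (_ * _).
by apply: eq_bigr => k _; rewrite addnC.
Qed.

Lemma qfact_rev r : \prod_(0 <= k < r) qdiff (r - k) = qfact r.
Proof.
rewrite big_nat_rev add0n; apply: eq_big_nat => k /andP[_ lt_kr].
by congr qdiff; lia.
Qed.

Lemma qfact_binom a i : (i <= a)%N ->
  qfact a / (qfact i * qfact (a - i)) =
  x ^- (i * (a - i)) * qbinom (x ^+ 2) a i.
Proof.
move=> le_ia.
have top : qfact a = qfact (a - i) * \prod_(k < i) qdiff (a - k).
  rewrite -{1}(subnK le_ia) qfactD big_nat_rev big_mkord add0n.
  by congr (_ * _); apply: eq_bigr => k _; congr qdiff; have := ltn_ord k; lia.
have ratio k : qdiff (a - k) / qdiff k.+1 =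
    x ^+ k.+1 / x ^+ (a - k) * ((1 - (x ^+ 2) ^+ (a - k)) / (1 - (x ^+ 2) ^+ k.+1)).
  rewrite /qdiff !(exprAC x 2); field.
  by rewrite !expf_neq0 // -exprM -exprD subr_eq0 eq_sym subr_eq0 !x_not_unity_root.
have bot : qfact i = \prod_(k < i) qdiff k.+1 by rewrite /qfact big_mkord.
transitivity (\prod_(k < i) (qdiff (a - k) / qdiff k.+1)).
  by rewrite prodf_div top -bot; field; rewrite !qfact_neq0.
under eq_bigr => k _ do rewrite ratio.
rewrite big_split /= prodf_div !prodrXr; congr (_ * _).
by rewrite sum_sub_ord // exprD invfM mulrA divff ?expf_neq0 // mul1r.
Qed.

Lemma qsum_sub b a : (b <= a)%N ->
  qsum (2 * b + 1) - qsum (2 * a + 1) = - (qdiff (a - b) * qdiff (a + b + 1)).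
Proof.
move=> le_ba; rewrite /qsum /qdiff; have u_neq0 : x ^+ (a - b) != 0 by rewrite expf_neq0.
have v_neq0 : x ^+ (a + b + 1) != 0 by rewrite expf_neq0.
have -> : x ^+ (2 * b + 1) = x ^+ (a + b + 1) / x ^+ (a - b).
  by apply/(canRL (mulfK u_neq0)); rewrite -exprD; congr (_ ^+ _); lia.
have -> : x ^+ (2 * a + 1) = x ^+ (a - b) * x ^+ (a + b + 1).
  by rewrite -exprD; congr (_ ^+ _); lia.
by field; rewrite u_neq0 v_neq0.
Qed.

(* For a decreasing sequence [s] of half-exponents, this is the product form of the
   alternant [det (y_k^j - y_k^-j)] with [y_k = x^(2 s_k + 1)], see [det_weyl_prod]. *)
Definition weyl_prod (s : seq nat) : R :=
  \prod_(a <- s) (qdiff (2 * a + 1) *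
    \prod_(b <- s | (b < a)%N) (qsum (2 * b + 1) - qsum (2 * a + 1))).

Definition weyl_factor (c : nat) (s : seq nat) : R :=
  qdiff (2 * c + 1) *
  \prod_(b <- s | (b < c)%N) (qsum (2 * b + 1) - qsum (2 * c + 1)) *
  \prod_(a <- s | (c < a)%N) (qsum (2 * c + 1) - qsum (2 * a + 1)).

Lemma weyl_prod_cons c s : weyl_prod (c :: s) = weyl_factor c s * weyl_prod s.
Proof.
have split_head a :
    \prod_(b <- c :: s | (b < a)%N) (qsum (2 * b + 1) - qsum (2 * a + 1)) =
    (if (c < a)%N then qsum (2 * c + 1) - qsum (2 * a + 1) else 1) *
    \prod_(b <- s | (b < a)%N) (qsum (2 * b + 1) - qsum (2 * a + 1)).
  by rewrite big_cons; case: ifP; rewrite ?mul1r.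
rewrite /weyl_prod /weyl_factor big_cons split_head ltnn mul1r.
under [\prod_(j <- s) _]eq_bigr => a _ do rewrite split_head mulrCA.
by rewrite big_split /= -big_mkcond !mulrA.
Qed.

Lemma weyl_prod_perm s1 s2 : perm_eq s1 s2 -> weyl_prod s1 = weyl_prod s2.
Proof.
move=> s12; rewrite /weyl_prod (perm_big _ s12) /=.
by apply: eq_bigr => a _; rewrite (perm_big _ s12).
Qed.

Lemma weyl_prod_neq0 s : weyl_prod s != 0.
Proof.
rewrite prodf_seq_neq0; apply/allP => a _ /=.
rewrite mulf_neq0 ?qdiff_neq0 ?addn_gt0 ?orbT // prodf_seq_neq0; apply/allP => b _ /=.
apply/implyP => lt_ba; rewrite qsum_sub ?(ltnW lt_ba) // oppr_eq0.
by rewrite mulf_neq0 ?qdiff_neq0 ?subn_gt0 ?addn1.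
Qed.

Lemma weyl_factor_rem_iotaE N c : (c <= N)%N ->
  weyl_factor c (rem c (iota 0 N.+1)) =
  qdiff (2 * c + 1) * \prod_(0 <= b < c) - (qdiff (c - b) * qdiff (c + b + 1)) *
  \prod_(c.+1 <= a < N.+1) - (qdiff (a - c) * qdiff (a + c + 1)).
Proof.
move=> le_cN; rewrite rem_iota // /weyl_factor !big_cat /=.
have below : \prod_(0 <= b < c | (b < c)%N) (qsum (2 * b + 1) - qsum (2 * c + 1)) =
    \prod_(0 <= b < c) - (qdiff (c - b) * qdiff (c + b + 1)).
  rewrite big_mkcond; apply: eq_big_nat => b /andP[_ lt_bc].
  by rewrite lt_bc qsum_sub // ltnW.
have above : \prod_(c.+1 <= a < N.+1 | (c < a)%N) (qsum (2 * c + 1) - qsum (2 * a + 1)) =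
    \prod_(c.+1 <= a < N.+1) - (qdiff (a - c) * qdiff (a + c + 1)).
  rewrite big_mkcond; apply: eq_big_nat => a /andP[lt_ca _].
  by rewrite lt_ca qsum_sub // ltnW.
have none_below :
    \prod_(c.+1 <= b < N.+1 | (b < c)%N) (qsum (2 * b + 1) - qsum (2 * c + 1)) = 1.
  by rewrite big_nat_cond big_pred0 // => b; apply/negbTE; lia.
have none_above :
    \prod_(0 <= a < c | (c < a)%N) (qsum (2 * c + 1) - qsum (2 * a + 1)) = 1.
  by rewrite big_nat_cond big_pred0 // => a; apply/negbTE; lia.
by rewrite below above none_below none_above mulr1 mul1r.
Qed.

Lemma weyl_factor_rem_iota N c : (c <= N)%N ->
  weyl_factor c (rem c (iota 0 N.+1)) =
  (-1) ^+ N * (qfact (N - c) * qfact (N + c).+1).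
Proof.
move=> le_cN; rewrite weyl_factor_rem_iotaE // !prod_nat_opp subn0 subSS.
have shift : \prod_(c.+1 <= k < N.+1) qdiff (k - c) = qfact (N - c).
  rewrite (big_addn 0 N.+1 c.+1) subSS; apply: eq_bigr => k _.
  by congr qdiff; lia.
have merge : qfact (N + c).+1 = qfact c * (\prod_(0 <= k < c) qdiff (c + k + 1) *
    (qdiff (2 * c + 1) * \prod_(c.+1 <= k < N.+1) qdiff (k + c + 1))).
  rewrite -addSn addnC qfactD (big_cat_nat (leq0n c) (leqW le_cN)) /=.
  rewrite [\prod_(c <= k < N.+1) _]big_ltn ?ltnS //; congr (_ * (_ * (_ * _))).
  - by apply: eq_bigr => k _; rewrite addn1.
  - by congr qdiff; lia.
  - by apply: eq_bigr => k _; congr qdiff; lia.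
have sign : (-1) ^+ N = (-1) ^+ c * (-1) ^+ (N - c) :> R by rewrite -exprD subnKC.
by rewrite !big_split /= qfact_rev shift merge sign; ring.
Qed.

Lemma weyl_prod_rem_iota N c : (c <= N)%N ->
  weyl_prod (rem c (iota 0 N.+1)) * ((-1) ^+ N * (qfact (N - c) * qfact (N + c).+1)) =
  weyl_prod (iota 0 N.+1).
Proof.
move=> le_cN; rewrite -weyl_factor_rem_iota // mulrC -weyl_prod_cons.
by apply/esym/weyl_prod_perm/perm_to_rem; rewrite mem_iota; lia.
Qed.

Lemma weyl_prod_rem_ratio N c : (c <= N)%N ->
  weyl_prod (rem c (iota 0 N.+1)) / weyl_prod (rem N (iota 0 N.+1)) =
  qfact (N + N).+1 / (qfact (N - c) * qfact (N + c).+1).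
Proof.
move=> le_cN; have W_neq0 := weyl_prod_neq0 (iota 0 N.+1).
have sign_neq0 : (-1) ^+ N != 0 :> R by rewrite expf_neq0 ?oppr_eq0 ?oner_neq0.
have := weyl_prod_rem_iota N N (leqnn N); have := weyl_prod_rem_iota N c le_cN.
rewrite subnn qfact0 mul1r => /(canRL (mulfK _)) -> => [/(canRL (mulfK _)) ->|].
- by field; rewrite W_neq0 sign_neq0 !qfact_neq0.
- by rewrite mulf_neq0 ?qfact_neq0.
- by rewrite !mulf_neq0 ?qfact_neq0.
Qed.

Lemma det_weyl_prod n (al : nat -> nat) :
    (forall k l, (k < l < n)%N -> (al l < al k)%N) ->
  \det (\matrix_(k < n, j < n) qdiff ((2 * al k + 1) * j.+1)) =
  weyl_prod [seq al k | k <- iota 0 n].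
Proof.
move=> al_decr.
have order_al (k l : 'I_n) : (k < l)%N = (al l < al k)%N.
  case: (ltngtP k l) => [lt_kl | lt_lk | /val_inj ->]; last by rewrite ltnn.
  - by rewrite al_decr // lt_kl ltn_ord.
  - by apply/esym/negbTE; rewrite -leqNgt ltnW // al_decr // lt_lk ltn_ord.
have -> : \matrix_(k < n, j < n) qdiff ((2 * al k + 1) * j.+1) =
    \matrix_(k, j) ((x ^+ (2 * al k + 1)) ^+ (j : nat).+1 -
                    ((x ^+ (2 * al k + 1)) ^+ (j : nat).+1)^-1).
  by apply/matrixP => k j; rewrite !mxE /qdiff -exprM.
rewrite det_chebU => [|k]; last by rewrite expf_neq0.
have -> : iota 0 n = index_iota 0 n by rewrite /index_iota subn0.
rewrite /weyl_prod big_map big_mkord -big_split /=.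
apply: eq_bigr => k _; congr (_ * _).
by rewrite big_map big_mkord; apply: eq_bigl => l; rewrite order_al.
Qed.

End WeylProduct.

Lemma tq_neq0 : tq != 0.
Proof. by rewrite /tq tofrac_eq0 polyX_eq0. Qed.

Lemma tq_not_unity_root r : (0 < r)%N -> tq ^+ r != 1.
Proof.
move=> r_gt0; rewrite /tq -rmorphXn /= -tofrac1 tofrac_eq.
apply/eqP => /(congr1 (fun p : {poly rat} => size p)).
by rewrite size_polyXn size_poly1 => -[r0]; rewrite r0 in r_gt0.
Qed.

Lemma altB_det n m :
  altB n m = \det (\matrix_(k < n, j < n)
                     (tq ^ ((j : nat).+1%:Z * m k) - tq ^ (- ((j : nat).+1%:Z * m k)))).
Proof.
rewrite /altB /determinant; set M := \matrix_(k < n, j < n) _.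
apply: eq_bigr => s _.
(* Each entry is a sum over the sign of the exponent; distributing the product of these
   sums over all sign vectors [e] gives the signed-permutation sum defining [altB]. *)
have entry k : M k (s k) =
    \sum_(b : bool) (-1) ^+ b * tq ^ ((-1) ^+ b * ((s k : nat).+1%:Z * m k)).
  by rewrite big_bool /= !mxE expr1 expr0 !mul1r !mulN1r addrC.
rewrite (eq_bigr _ (fun k _ => entry k)) bigA_distr_bigA mulr_sumr.
apply: eq_bigr => e _; rewrite big_split /= prodrXr prodr_exprz ?tq_neq0 // exprD -mulrA.
congr (_ * (_ * _)).
  congr (_ ^+ _); rewrite -sum1_card (big_mkcond (fun k => k \in _)) /=.
  by apply: eq_bigr => k _; rewrite inE; case: (e k).
by congr (_ ^ _); apply: eq_bigr => k _; rewrite mulrCA mulrA.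
Qed.

Lemma altB_weyl_prod n (al : nat -> nat) (m : 'I_n -> int) :
    (forall k : 'I_n, m k = (2 * al k + 1)%N%:Z) ->
    (forall k l, (k < l < n)%N -> (al l < al k)%N) ->
  altB n m = weyl_prod tq [seq al k | k <- iota 0 n].
Proof.
move=> m_odd al_decr; rewrite altB_det -(det_weyl_prod tq tq_neq0) //.
by congr (\det _); apply/matrixP => k j; rewrite !mxE m_odd -PoszM -exprnN mulnC.
Qed.

Definition half_exponent (n i k : nat) : nat := (n - k.+1 + (k < i))%N.

Lemma half_exponentE n i (k : 'I_n) :
  omega_tilde2 n i k + rho2 n k = (2 * half_exponent n i k + 1)%N%:Z.
Proof.
rewrite /omega_tilde2 /rho2 /half_exponent; have := ltn_ord k.
by case: ifP => lt_ki lt_kn; rewrite ?add0r -?PoszD; congr Posz; lia.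
Qed.

Lemma half_exponent_decr n i k l :
  (k < l < n)%N -> (half_exponent n i l < half_exponent n i k)%N.
Proof. by rewrite /half_exponent; case: ltnP => ?; case: ltnP => ? /=; lia. Qed.

Lemma half_exponent_range n i k : (i <= n)%N -> (k < n)%N ->
  (half_exponent n i k <= n)%N && (half_exponent n i k != n - i)%N.
Proof. by rewrite /half_exponent; case: ltnP => ? /=; lia. Qed.

Lemma altB_rem_iota n i m : (i <= n)%N ->
    (forall k : 'I_n, m k = (2 * half_exponent n i k + 1)%N%:Z) ->
  altB n m = weyl_prod tq (rem (n - i)%N (iota 0 n.+1)).
Proof.
move=> le_in m_eq; rewrite (altB_weyl_prod _ _ _ m_eq) => [|k l]; last exact: half_exponent_decr.
apply/weyl_prod_perm/perm_map_rem_iota; rewrite ?leq_subr //.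
- exact: half_exponent_decr.
- by move=> k; apply: half_exponent_range.
Qed.

Lemma psB_omega_tilde n i : (i <= n)%N ->
  psB n (omega_tilde2 n i) =
  qfact tq (2 * n + 1) / (qfact tq i * qfact tq (2 * n + 1 - i)).
Proof.
move=> le_in; rewrite /psB (altB_rem_iota _ _ _ le_in (half_exponentE n i)).
rewrite (altB_rem_iota n 0) // => [|k]; last by rewrite -half_exponentE /omega_tilde2 add0r.
rewrite subn0 (weyl_prod_rem_ratio tq tq_neq0 tq_not_unity_root) ?leq_subr //.
by rewrite subKn // addnn -addn1 -mul2n; congr (_ / (_ * qfact _ _)); lia.
Qed.

Fixpoint gauss_poly (a b : nat) : {poly rat} :=
  match a, b with
  | _, 0 => 1
  | 0, _.+1 => 0
  | a'.+1, b'.+1 => gauss_poly a' b' + 'X^(b'.+1) * gauss_poly a' b'.+1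
  end.

Lemma gauss_poly_coef0 a b : (b <= a)%N -> (gauss_poly a b)`_0 = 1.
Proof.
elim: a b => [|a IH] [|b] le_ba //=; rewrite ?coefC //.
by rewrite coefD coefXnM /= IH // addr0.
Qed.

Definition rat_to_F : {rmorphism rat -> F} := ((@tofrac _) \o (@polyC rat))%FUN.

Lemma evqE p : evq p = (map_poly rat_to_F p).[qq].
Proof. by []. Qed.

Lemma qq_not_unity_root r : (0 < r)%N -> qq ^+ r != 1.
Proof. by move=> r_gt0; rewrite /qq -exprM tq_not_unity_root ?muln_gt0. Qed.

Lemma gauss_binomE a b : gauss_binom a b = qbinom qq a b.
Proof. by []. Qed.

Lemma evq_gauss_poly a b : evq (gauss_poly a b) = gauss_binom a b.
Proof.
rewrite gauss_binomE; elim: a b => [|a IH] [|b] /=; rewrite evqE.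
- by rewrite rmorph1 hornerC /qbinom big_ord0.
- by rewrite rmorph0 horner0 qbinom_eq0.
- by rewrite rmorph1 hornerC /qbinom big_ord0.
rewrite rmorphD rmorphM /= map_polyXn hornerD hornerM hornerXn -!evqE !IH.
by rewrite (qbinomS qq qq_not_unity_root).
Qed.

Theorem proposition5p26 (n i : nat) (hn : (1 <= n)%N) (hi1 : (1 <= i)%N)
    (hin : (i <= n)%N) :
  exists eta : int,
    lowest_q_exponent (psB n (omega_tilde2 n i)) eta /\
    ps_tilde (psB n (omega_tilde2 n i)) eta = gauss_binom (2 * n + 1) i.
Proof.
pose eta : int := - (n * i - 'C(i, 2))%N%:Z.
have q_eta : qq ^ eta = tq ^- (i * (2 * n + 1 - i)).
  have -> : (i * (2 * n + 1 - i) = 2 * (n * i - 'C(i, 2)))%N.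
    by have := bin2_double i; nia.
  by rewrite /eta -exprnN /qq -exprM.
have ps_eq : psB n (omega_tilde2 n i) = qq ^ eta * gauss_binom (2 * n + 1) i.
  rewrite psB_omega_tilde // (qfact_binom tq tq_neq0 tq_not_unity_root) ?q_eta //; lia.
exists eta; split.
  exists (gauss_poly (2 * n + 1) i); rewrite evq_gauss_poly -ps_eq.
  by rewrite gauss_poly_coef0 ?oner_neq0 //; lia.
by rewrite /ps_tilde ps_eq mulrA -expfzDr ?expf_neq0 ?tq_neq0 // addNr expr0z mul1r.
Qed.
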